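(* Let $a$ be a polynomial of degree $n$ with $\int_0^1 a(x)\,dx=0$, so that $(a,0)\in\mathcal U_{n/n+1}$. Then the Zariski tangent space $T_{(a,0)}\mathcal U_{n/n+1}$ is a vector space of dimension $n+1$, consisting of the pairs of polynomials $(p,q)$ of degree at most $n$ such that $q$ and $a$ are co-linear (i.e. $q\in\mathbb C\cdot a$) and $\int_0^1 p(x)\,dx=0$.
   Context: Work over $\mathbb C$. Let $\mathcal A_n\cong\mathbb C^{2n+2}$ be the vector space of pairs $(a,b)$ of polynomials of degree at most $n$ (identified with Abel equations $\frac{dy}{dx}=a(x)y^2+b(x)y^3$). The set $\mathcal U_{n/n+1}\subset\mathcal A_n$ is the set of pairs $(a,b)$ with $\deg a,\deg b\leq n$, $\int_0^1 a(x)dx=\int_0^1 b(x)dx=0$, and $a,b$ co-linear polynomials (linearly dependent over $\mathbb C$). *)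

From HB Require Import structures.
From mathcomp Require Import all_boot all_order all_algebra.
From mathcomp Require Import mpoly.
Set Implicit Arguments. Unset Strict Implicit. Unset Printing Implicit Defensive.
Import Order.TTheory GRing.Theory Num.Theory.
Local Open Scope ring_scope.

Section Defs.
Variable C : numClosedFieldType.

Definition ambdim (n : nat) : nat := (n.+1 + n.+1)%N.

(* integral over [0,1] of a polynomial: \int_0^1 x^i dx = 1/(i+1) *)
Definition int01 (p : {poly C}) : C :=
  \sum_(i < size p) p`_i / (i.+1)%:R.

Definition colinear (p q : {poly C}) : Prop :=
  exists l m : C, (l != 0 \/ m != 0) /\ l *: p + m *: q = 0.

(* the polynomials a, b encoded by a point of C^(2n+2):
   coordinates 0..n are the coefficients of a, n+1..2n+1 those of b *)
Definition polyA (n : nat) (v : 'rV[C]_(ambdim n)) : {poly C} :=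
  \poly_(i < n.+1) v 0 (lshift n.+1 (inord i : 'I_n.+1)).
Definition polyB (n : nat) (v : 'rV[C]_(ambdim n)) : {poly C} :=
  \poly_(i < n.+1) v 0 (rshift n.+1 (inord i : 'I_n.+1)).

Definition coords (n : nat) (p q : {poly C}) : 'rV[C]_(ambdim n) :=
  \row_(i < ambdim n) match split i with inl j => p`_j | inr j => q`_j end.

Definition inU (n : nat) (v : 'rV[C]_(ambdim n)) : Prop :=
  [/\ int01 (polyA v) = 0, int01 (polyB v) = 0 & colinear (polyA v) (polyB v)].

Definition evalpt (k : nat) (f : {mpoly C[k]}) (v : 'rV[C]_k) : C :=
  f.@[fun i => v 0 i].

Definition vanishing_ideal (k : nat) (S : 'rV[C]_k -> Prop) (f : {mpoly C[k]}) : Prop :=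
  forall v, S v -> evalpt f v = 0.

Definition zariski_tangent (k : nat) (S : 'rV[C]_k -> Prop) (x w : 'rV[C]_k) : Prop :=
  forall f : {mpoly C[k]}, vanishing_ideal S f ->
    \sum_(i < k) evalpt (mderiv i f) x * w 0 i = 0.

End Defs.

From HB Require Import structures.
From mathcomp Require Import all_boot all_order all_algebra.
From mathcomp Require Import mpoly.
Set Implicit Arguments. Unset Strict Implicit. Unset Printing Implicit Defensive.
Import Order.TTheory GRing.Theory Num.Theory.
Local Open Scope ring_scope.

(* Tangent vectors are detected by curves: if U contains the quadratic curve
   x + t w + t^2 u for all t, then every f vanishing on U vanishes along it, so
   the t-coefficient of f along the curve, which is d_x f (w), is 0. At
   x0 = (a, 0) and w = (p, c a) with int01 p = 0, the curve with u = (0, c p) is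
   (a + t p, c t (a + t p)), which lies in U. Conversely, int01 of the
   a-coordinates and the 2x2 minors a_i b_j - a_j b_i vanish on U; their
   differentials at (a, 0) give int01 p = 0 and a_i q_j = a_j q_i, so q is a
   multiple of a because a_n <> 0. The tangent space therefore has the basis
   (0, a), (X^i - 1/(i+1), 0) for 1 <= i <= n. *)

Section DirectionalDerivative.
Variables (R : comNzRingType) (k : nat) (x w : 'I_k -> R).
Implicit Types f g : {mpoly R[k]}.

Definition mdirderiv f : R := \sum_(i < k) (mderiv i f).@[x] * w i.

Lemma mdirderiv_is_linear : linear_for *%R mdirderiv.
Proof.
move=> c f g; rewrite /mdirderiv mulr_sumr -big_split; apply: eq_bigr => i _.
by rewrite linearP mevalD mevalZ mulrDl mulrA.
Qed.

HB.instance Definition _ :=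
  GRing.isLinear.Build R {mpoly R[k]} R *%R mdirderiv mdirderiv_is_linear.

Lemma mdirderivC c : mdirderiv c%:MP = 0.
Proof. by rewrite /mdirderiv big1 // => i _; rewrite mderivC meval0 mul0r. Qed.

Lemma mdirderivX i : mdirderiv 'X_i = w i.
Proof.
rewrite /mdirderiv (bigD1 i) //= big1 ?addr0 => [|j /negbTE neq_ji].
  rewrite mderivX mnm1E eqxx.
  have -> : (U_(i) - U_(i))%MM = 0%MM by apply/mnmP => j; rewrite mnmBE subnn mnm0E.
  by rewrite mpolyX0 scale1r meval1 mul1r.
by rewrite mderivX mnm1E eq_sym neq_ji scale0r meval0 mul0r.
Qed.

Lemma mdirderivM f g :
  mdirderiv (f * g) = mdirderiv f * g.@[x] + f.@[x] * mdirderiv g.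
Proof.
rewrite /mdirderiv mulr_suml mulr_sumr -big_split; apply: eq_bigr => i _.
by rewrite mderivM mevalD !mevalM mulrDl mulrAC mulrA.
Qed.

Lemma derivation_at_eq_mdirderiv (D : {mpoly R[k]} -> R) :
    linear_for *%R D ->
    (forall f g, D (f * g) = D f * g.@[x] + f.@[x] * D g) ->
    (forall i, D 'X_i = w i) ->
  D =1 mdirderiv.
Proof.
move=> linD DM DX.
have D0 : D 0 = 0 by have := linD (-1) 0 0; rewrite scaler0 add0r mulN1r addNr.
have D1 : D 1 = 0.
  have := DM 1 1; rewrite mulr1 meval1 mulr1 mul1r => D1D.
  by apply: (@addrI _ (D 1)); rewrite addr0 -D1D.
have DXm m : D 'X_[m] = mdirderiv 'X_[m].
  rewrite mpolyXE_id; apply: (big_ind (fun f => D f = mdirderiv f)).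
  - by rewrite D1 -mpolyC1 mdirderivC.
  - by move=> f g Df Dg; rewrite DM mdirderivM Df Dg.
  move=> i _; elim: (m i) => [|e IHe]; first by rewrite expr0 D1 -mpolyC1 mdirderivC.
  by rewrite exprS DM mdirderivM IHe DX mdirderivX.
elim/mpolyind => [|c m f _ _ IHf]; first by rewrite D0 raddf0.
by rewrite linD linearP DXm IHf.
Qed.

Section QuadraticCurve.
Variable u : 'I_k -> R.

Definition mcurve (i : 'I_k) : {poly R} :=
  (x i)%:P + 'X * (w i)%:P + 'X^2 * (u i)%:P.

Local Notation along f := (mmap (@polyC R) mcurve f).

Lemma horner_along f t :
  (along f).[t] = f.@[fun i => x i + t * w i + t ^+ 2 * u i].
Proof.
rewrite /mmap mevalE horner_sum; apply: eq_bigr => m _.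
rewrite hornerM hornerC /mmap1 horner_prod; congr (_ * _); apply: eq_bigr => i _.
by rewrite horner_exp /mcurve !hornerE.
Qed.

Lemma coef0_along f : (along f)`_0 = f.@[x].
Proof.
rewrite -horner_coef0 horner_along; apply: meval_eq => i.
by rewrite expr0n !mul0r !addr0.
Qed.

Lemma coef1_along f : (along f)`_1 = mdirderiv f.
Proof.
move: f; apply: derivation_at_eq_mdirderiv => [c g h | g h | i].
- by rewrite mmapD mmapZ coefD coefCM.
- by rewrite rmorphM coefM !big_ord_recl big_ord0 !coef0_along addr0 mulrC addrC.
- by rewrite mmapX mmap1U /mcurve !coefD coefC coefXM coefXnM /= coefC add0r addr0.
Qed.

End QuadraticCurve.
End DirectionalDerivative.

Lemma poly_eq0_of_horner_eq0 (R : numDomainType) (p : {poly R}) :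
  (forall t, p.[t] = 0) -> p = 0.
Proof.
move=> p0; apply: (@roots_geq_poly_eq0 _ _ [seq i%:R | i <- iota 0 (size p)]).
- by apply/allP => t _; apply/rootP.
- by rewrite map_inj_uniq ?iota_uniq // => i j /eqP; rewrite eqr_nat => /eqP.
by rewrite size_map size_iota.
Qed.

Lemma mdirderiv_eq0_along (R : numDomainType) k (x w u : 'I_k -> R) f :
    (forall t, f.@[fun i => x i + t * w i + t ^+ 2 * u i] = 0) ->
  mdirderiv x w f = 0.
Proof.
move=> f0; rewrite -(coef1_along _ _ u) (poly_eq0_of_horner_eq0 (p := mmap _ _ f)).
  by rewrite coef0.
by move=> t; rewrite horner_along.
Qed.

Lemma split_lshift m n (i : 'I_m) : split (lshift n i) = inl i.
Proof. exact: (unsplitK (inl i)). Qed.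

Lemma split_rshift m n (i : 'I_n) : split (rshift m i) = inr i.
Proof. exact: (unsplitK (inr i)). Qed.

Section Integral.
Variable C : numClosedFieldType.
Implicit Types p q : {poly C}.

Lemma int01E p N : (size p <= N)%N -> int01 p = \sum_(i < N) p`_i / i.+1%:R.
Proof.
move=> le_pN; rewrite /int01 -!(big_mkord xpredT (fun i => p`_i / i.+1%:R)).
rewrite (big_cat_nat (leq0n _) le_pN) /= [X in _ + X]big1_seq ?addr0 // => i /andP[_].
by rewrite mem_index_iota => /andP[le_pi _]; rewrite nth_default ?mul0r.
Qed.

Lemma int01_is_linear : linear_for *%R (@int01 C).
Proof.
move=> c p q; pose N := maxn (size p) (size q).
have le_pN : (size p <= N)%N by rewrite leq_maxl.
have le_qN : (size q <= N)%N by rewrite leq_maxr.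
have le_cpqN : (size (c *: p + q)%R <= N)%N.
  apply: leq_trans (size_polyD _ _) _; rewrite geq_max le_qN andbT.
  exact: leq_trans (size_scale_leq _ _) le_pN.
rewrite !(int01E le_pN, int01E le_qN, int01E le_cpqN) mulr_sumr -big_split.
by apply: eq_bigr => i _; rewrite coefD coefZ mulrDl mulrA.
Qed.

HB.instance Definition _ :=
  GRing.isLinear.Build C {poly C} C *%R (@int01 C) int01_is_linear.

Lemma int01C (c : C) : int01 c%:P = c.
Proof. by rewrite (int01E (size_polyC_leq1 c)) big_ord1 coefC divr1. Qed.

Definition int01_proj p : {poly C} := p - (int01 p)%:P.

Lemma int01_proj_is_linear : linear int01_proj.
Proof.
move=> c p q; rewrite /int01_proj linearP /= polyCD polyCM mul_polyC scalerBr.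
by rewrite opprD addrACA.
Qed.

HB.instance Definition _ :=
  GRing.isLinear.Build C {poly C} {poly C} _ int01_proj int01_proj_is_linear.

Lemma int01_projDC p (c : C) : int01_proj (p + c%:P) = int01_proj p.
Proof. by rewrite linearD /= /int01_proj int01C subrr addr0. Qed.

Lemma int01_int01_proj p : int01 (int01_proj p) = 0.
Proof. by rewrite /int01_proj linearB /= int01C subrr. Qed.

Lemma int01_proj_id p : int01 p = 0 -> int01_proj p = p.
Proof. by rewrite /int01_proj => ->; rewrite subr0. Qed.

Lemma coef_int01_proj p i : i != 0%N -> (int01_proj p)`_i = p`_i.
Proof. by rewrite /int01_proj coefB coefC => /negbTE->; rewrite subr0. Qed.

End Integral.

Section Colinear.
Variable C : numClosedFieldType.
Implicit Types p q : {poly C}.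

Lemma colinear_scale p q :
  colinear p q -> (exists s, p = s *: q) \/ (exists s, q = s *: p).
Proof.
case=> l [m [[nz_l | nz_m] /eqP pq0]];
  [left; exists (- (m / l)) | right; exists (- (l / m))].
  apply: (scalerI nz_l); move: pq0; rewrite addr_eq0 => /eqP->.
  by rewrite scalerA mulrN mulrCA divff // mulr1 scaleNr.
apply: (scalerI nz_m); move: pq0; rewrite addrC addr_eq0 => /eqP->.
by rewrite scalerA mulrN mulrCA divff // mulr1 scaleNr.
Qed.

Lemma colinear_coefM p q i j : colinear p q -> p`_i * q`_j = p`_j * q`_i.
Proof.
case/colinear_scale => -[s ->]; rewrite !coefZ; first exact: mulrAC.
by rewrite mulrCA [RHS]mulrCA [p`_j * _]mulrC.
Qed.

Lemma scale_coefM p q N :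
  p`_N != 0 -> (forall j, p`_N * q`_j = p`_j * q`_N) -> q = (q`_N / p`_N) *: p.
Proof.
move=> nz_pN pq; apply/polyP => j; apply: (mulfI nz_pN).
by rewrite coefZ pq mulrA mulrCA divff // mulr1 mulrC.
Qed.

End Colinear.

Section Coordinates.
Variables (C : numClosedFieldType) (n : nat).
Implicit Types (x v : 'rV[C]_(ambdim n)) (p q : {poly C}).

Lemma polyA_is_linear : linear (@polyA C n).
Proof.
move=> c v v'; apply/polyP => i.
by rewrite coefD coefZ !coef_poly; case: ifP; rewrite ?mxE ?mulr0 ?addr0.
Qed.

HB.instance Definition _ := GRing.isLinear.Build C 'rV[C]_(ambdim n) {poly C} _
  (@polyA C n) polyA_is_linear.

Lemma polyB_is_linear : linear (@polyB C n).
Proof.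
move=> c v v'; apply/polyP => i.
by rewrite coefD coefZ !coef_poly; case: ifP; rewrite ?mxE ?mulr0 ?addr0.
Qed.

HB.instance Definition _ := GRing.isLinear.Build C 'rV[C]_(ambdim n) {poly C} _
  (@polyB C n) polyB_is_linear.

Lemma coef_polyA v (i : 'I_n.+1) : (polyA v)`_i = v 0 (lshift n.+1 i).
Proof. by rewrite coef_poly ltn_ord inord_val. Qed.

Lemma coef_polyB v (i : 'I_n.+1) : (polyB v)`_i = v 0 (rshift n.+1 i).
Proof. by rewrite coef_poly ltn_ord inord_val. Qed.

Lemma polyA_coords p q : (size p <= n.+1)%N -> polyA (coords n p q) = p.
Proof.
move=> le_pn; apply/polyP => j; rewrite coef_poly; case: ltnP => [lt_jn | le_nj].
  by rewrite mxE split_lshift inordK.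
by rewrite nth_default // (leq_trans le_pn le_nj).
Qed.

Lemma polyB_coords p q : (size q <= n.+1)%N -> polyB (coords n p q) = q.
Proof.
move=> le_qn; apply/polyP => j; rewrite coef_poly; case: ltnP => [lt_jn | le_nj].
  by rewrite mxE split_rshift inordK.
by rewrite nth_default // (leq_trans le_qn le_nj).
Qed.

Lemma polyAB_inj v v' : polyA v = polyA v' -> polyB v = polyB v' -> v = v'.
Proof.
move=> eqA eqB; apply/rowP => j; rewrite -(splitK j).
by case: (split j) => i /=; rewrite -?coef_polyA -?coef_polyB ?eqA ?eqB.
Qed.

Lemma inU_scale v s : int01 (polyA v) = 0 -> polyB v = s *: polyA v -> inU v.
Proof.
move=> intA eqB; split => //; first by rewrite eqB linearZ /= intA mulr0.
exists s, (-1); split; first by right; rewrite oppr_eq0 oner_eq0.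
by rewrite eqB scaleN1r subrr.
Qed.

Definition int01A_mpoly : {mpoly C[ambdim n]} :=
  \sum_(i < n.+1) (i.+1%:R)^-1 *: 'X_(lshift n.+1 i).

Definition minor_mpoly (i j : 'I_n.+1) : {mpoly C[ambdim n]} :=
  'X_(lshift n.+1 i) * 'X_(rshift n.+1 j) - 'X_(lshift n.+1 j) * 'X_(rshift n.+1 i).

Lemma evalpt_int01A_mpoly v : evalpt int01A_mpoly v = int01 (polyA v).
Proof.
rewrite /evalpt raddf_sum (int01E (size_poly _ _)); apply: eq_bigr => i _.
by rewrite /= mevalZ mevalXU coef_polyA mulrC.
Qed.

Lemma mdirderiv_int01A_mpoly x v :
  mdirderiv (fun k => x 0 k) (fun k => v 0 k) int01A_mpoly = int01 (polyA v).
Proof.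
rewrite linear_sum (int01E (size_poly _ _)); apply: eq_bigr => i _.
by rewrite linearZ /= mdirderivX coef_polyA mulrC.
Qed.

Lemma evalpt_minor_mpoly v i j :
  evalpt (minor_mpoly i j) v =
  (polyA v)`_i * (polyB v)`_j - (polyA v)`_j * (polyB v)`_i.
Proof. by rewrite /evalpt mevalB !mevalM !mevalXU !coef_polyA !coef_polyB. Qed.

Lemma mdirderiv_minor_mpoly x v i j :
  mdirderiv (fun k => x 0 k) (fun k => v 0 k) (minor_mpoly i j) =
  (polyA v)`_i * (polyB x)`_j + (polyA x)`_i * (polyB v)`_j
  - ((polyA v)`_j * (polyB x)`_i + (polyA x)`_j * (polyB v)`_i).
Proof.
by rewrite raddfB /= !mdirderivM !mdirderivX !mevalXU !coef_polyA !coef_polyB.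
Qed.

End Coordinates.

Lemma zariski_tangentE (C : numClosedFieldType) k (S : 'rV[C]_k -> Prop) x w :
  zariski_tangent S x w <->
  forall f, vanishing_ideal S f -> mdirderiv (fun i => x 0 i) (fun i => w 0 i) f = 0.
Proof. by []. Qed.

Section TangentSpace.
Variables (C : numClosedFieldType) (n : nat) (a : {poly C}).
Hypotheses (size_a : size a = n.+1) (int01_a : int01 a = 0).
Implicit Types (w : 'rV[C]_(ambdim n)) (p q : {poly C}).

Local Notation x0 := (coords n a 0).

Definition tangentU p q : Prop := (exists c, q = c *: a) /\ int01 p = 0.

Lemma polyA_x0 : polyA x0 = a.
Proof. by rewrite polyA_coords ?size_a. Qed.

Lemma polyB_x0 : polyB x0 = 0.
Proof. by rewrite polyB_coords ?size_poly0. Qed.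

Lemma inU_x0 : inU x0.
Proof. by apply: (@inU_scale _ _ _ 0); rewrite polyA_x0 ?polyB_x0 ?scale0r. Qed.

Lemma lead_coef_neq0 : a`_n != 0.
Proof.
by rewrite -[n]/(n.+1.-1) -size_a -lead_coefE lead_coef_eq0 -size_poly_eq0 size_a.
Qed.

Lemma zariski_tangent_of_tangentU w :
  tangentU (polyA w) (polyB w) -> zariski_tangent (@inU C n) x0 w.
Proof.
move=> [[c eqB] intA]; apply/zariski_tangentE => f vanf.
pose u := coords n 0 (c *: polyA w).
apply: (mdirderiv_eq0_along (u := fun i => u 0 i)) => t.
have -> : f.@[fun i => x0 0 i + t * w 0 i + t ^+ 2 * u 0 i] =
          evalpt f (x0 + t *: w + t ^+ 2 *: u).
  by apply: meval_eq => i; rewrite !mxE.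
have eqA : polyA (x0 + t *: w + t ^+ 2 *: u) = a + t *: polyA w.
  by rewrite !linearD !linearZ /= polyA_x0 polyA_coords ?size_poly0 // scaler0 addr0.
apply: vanf; apply: (@inU_scale _ _ _ (c * t)).
- by rewrite eqA linearD linearZ /= int01_a intA mulr0 addr0.
rewrite eqA !linearD !linearZ /= polyB_x0 eqB polyB_coords; last first.
  exact: leq_trans (size_scale_leq _ _) (size_poly _ _).
by rewrite add0r !scalerA [t * c]mulrC mulrCA -expr2 [t ^+ 2 * c]mulrC.
Qed.

Lemma tangentU_of_zariski_tangent w :
  zariski_tangent (@inU C n) x0 w -> tangentU (polyA w) (polyB w).
Proof.
move/zariski_tangentE => tan_w; split; last first.
  rewrite -(mdirderiv_int01A_mpoly x0); apply: tan_w => v [intA _ _].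
  by rewrite evalpt_int01A_mpoly.
have minor_eq (j : 'I_n.+1) : a`_n * (polyB w)`_j = a`_j * (polyB w)`_n.
  apply/eqP; rewrite -subr_eq0; apply/eqP.
  transitivity
    (mdirderiv (fun i => x0 0 i) (fun i => w 0 i) (@minor_mpoly C n ord_max j)).
    by rewrite mdirderiv_minor_mpoly polyA_x0 polyB_x0 !coef0 !mulr0 !add0r.
  apply: tan_w => v [_ _ /colinear_coefM colAB].
  by rewrite evalpt_minor_mpoly colAB subrr.
exists ((polyB w)`_n / a`_n); apply: scale_coefM lead_coef_neq0 _ => j.
have [lt_jn | le_nj] := ltnP j n.+1; first exact: (minor_eq (Ordinal lt_jn)).
rewrite [a`_j]nth_default ?[(polyB w)`_j]nth_default ?mulr0 ?mul0r ?size_a //.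
exact: leq_trans (size_poly _ _) le_nj.
Qed.

Lemma zariski_tangentUP w :
  zariski_tangent (@inU C n) x0 w <-> tangentU (polyA w) (polyB w).
Proof.
split; first exact: tangentU_of_zariski_tangent.
exact: zariski_tangent_of_tangentU.
Qed.

(* Row 0 is (0, a), since [int01_proj 1 = 0]. *)
Definition tangent_basis : 'M[C]_(n.+1, ambdim n) :=
  \matrix_(i < n.+1) coords n (int01_proj 'X^i) ((i == ord0)%:R *: a).

Lemma polyA_tangent_basis (v : 'rV[C]_n.+1) :
  polyA (v *m tangent_basis) = int01_proj (\sum_(i < n.+1) v 0 i *: 'X^i).
Proof.
rewrite mulmx_sum_row !linear_sum; apply: eq_bigr => i _.
rewrite !linearZ rowK /= polyA_coords //.
apply: leq_trans (size_polyD _ _) _; rewrite size_polyN size_polyXn geq_max ltn_ord.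
exact: leq_trans (size_polyC_leq1 _) _.
Qed.

Lemma polyB_tangent_basis (v : 'rV[C]_n.+1) :
  polyB (v *m tangent_basis) = v 0 ord0 *: a.
Proof.
rewrite mulmx_sum_row linear_sum (bigD1 ord0) //= big1 ?addr0 => [|i nz_i].
  by rewrite linearZ rowK /= polyB_coords ?eqxx ?scale1r ?size_a.
by rewrite linearZ rowK /= polyB_coords (negbTE nz_i) scale0r ?size_poly0 ?scaler0.
Qed.

Lemma row_free_tangent_basis : row_free tangent_basis.
Proof.
rewrite -kermx_eq0; apply/rowV0P => v /sub_kermxP vB0; apply/rowP => i; rewrite mxE.
have [-> | nz_i] := eqVneq i ord0.
  have /eqP := polyB_tangent_basis v; rewrite vB0 linear0 eq_sym scaler_eq0.
  by rewrite -size_poly_eq0 size_a orbF => /eqP.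
have := congr1 (coefp i) (polyA_tangent_basis v).
rewrite /= vB0 linear0 coef0 coef_int01_proj // coef_sum => ->.
rewrite (bigD1 i) //= coefZ coefXn eqxx mulr1 big1 ?addr0 // => j /negbTE nz_j.
by rewrite coefZ coefXn eq_sym val_eqE nz_j mulr0.
Qed.

Lemma sub_tangent_basis w :
  (w <= tangent_basis)%MS <-> tangentU (polyA w) (polyB w).
Proof.
split=> [/submxP[v ->] | [[c eqB] intA]].
  split; first by exists (v 0 ord0); rewrite polyB_tangent_basis.
  by rewrite polyA_tangent_basis int01_int01_proj.
apply/submxP; pose v := \row_(i < n.+1) if i == ord0 then c else (polyA w)`_i.
exists v; apply: polyAB_inj; last by rewrite polyB_tangent_basis eqB mxE eqxx.
rewrite polyA_tangent_basis.
suff -> : \sum_(i < n.+1) v 0 i *: 'X^i = polyA w + (c - (polyA w)`_0)%:P.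
  by rewrite int01_projDC int01_proj_id.
transitivity (\poly_(i < n.+1) v 0 (inord i)).
  by rewrite poly_def; apply: eq_bigr => i _; rewrite inord_val.
apply/polyP => j; rewrite coef_poly coefD coefC; case: ltnP => [lt_jn | le_nj].
  rewrite mxE -val_eqE /= inordK //; case: eqP => [-> | _]; last by rewrite addr0.
  by rewrite addrC subrK.
have nz_j : (j == 0%N) = false by rewrite gtn_eqF // (leq_trans (ltn0Sn n) le_nj).
by rewrite nth_default ?(leq_trans (size_poly _ _) le_nj) // nz_j addr0.
Qed.

End TangentSpace.

Theorem mainTheorem2 (C : numClosedFieldType) (n : nat) (a : {poly C}) :
  size a = n.+1 -> int01 a = 0 ->
  inU (coords n a 0) /\
  (forall p q : {poly C}, (size p <= n.+1)%N -> (size q <= n.+1)%N ->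
     (zariski_tangent (@inU C n) (coords n a 0) (coords n p q) <->
      ((exists c : C, q = c *: a) /\ int01 p = 0))) /\
  (exists B : 'M[C]_(n.+1, ambdim n),
     \rank B = n.+1 /\
     forall w : 'rV[C]_(ambdim n),
       zariski_tangent (@inU C n) (coords n a 0) w <-> (w <= B)%MS).
Proof.
move=> size_a int01_a.
have tangentP w := zariski_tangentUP size_a int01_a w.
split; first exact: inU_x0.
split=> [p q le_pn le_qn | ].
  by have := tangentP (coords n p q); rewrite polyA_coords ?polyB_coords.
exists (tangent_basis n a); split; first exact/eqP/row_free_tangent_basis.
by move=> w; apply: iff_trans (tangentP w) (iff_sym (sub_tangent_basis size_a w)).
Qed.
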